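(* Every multi-parameter random simplicial complex $X\sim X(n,\mathbf{p})$ is homogeneous and spatially independent. Conversely, for every homogeneous and spatially independent random subcomplex $X$ of $\triangle_n$ there exists a multi-parameter $\mathbf{p}=(p_0,\dots,p_{n-1})\in[0,1]^n$ such that $X\sim X(n,\mathbf{p})$.
   Context: $\triangle_n=2^{[n]}$ is the complete simplicial complex on $[n]$; a subcomplex is a family $Y\subset2^{[n]}$ closed under taking subsets, $S_n$ is the set of subcomplexes, and a random subcomplex is an $S_n$-valued random variable. $X$ is homogeneous if $X$ and $gX=\{g(\sigma):\sigma\in X\}$ have the same distribution for every permutation $g$ of $[n]$; spatially independent if $\mathbb{P}(Y_1\cup Y_2\subset X)\mathbb{P}(Y_1\cap Y_2\subset X)=\mathbb{P}(Y_1\subset X)\mathbb{P}(Y_2\subset X)$ for all $Y_1,Y_2\in S_n$. The multi-parameter random simplicial complex $X(n,\mathbf{p})$: retain each vertex of $[n]$ independently with probability $p_0$; each edge with both endpoints retained is added independently with probability $p_1$; iteratively for $i=2,\dots,n-1$, each $i$-simplex (subset of size $i+1$) of $[n]$ all of whose proper faces are already present is added independently with probability $p_i$. Equivalently $\mathbb{P}(X=Y)=\prod_{i=0}^{n-1}p_i^{f_i(Y)}(1-p_i)^{e_i(Y)}$, where $f_i(Y)$ is the number of $i$-simplices of $Y$ and $e_i(Y)$ the number of $i$-simplices $\sigma\notin Y$ all of whose proper subsets lie in $Y$. *)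

From HB Require Import structures.
From mathcomp Require Import all_boot all_order all_fingroup all_algebra.
Set Implicit Arguments. Unset Strict Implicit. Unset Printing Implicit Defensive.
Import Order.TTheory GRing.Theory Num.Theory.
Local Open Scope ring_scope.

Definition subcomplex n (Y : {set {set 'I_n}}) : bool :=
  (set0 \in Y) && [forall s in Y, forall t : {set 'I_n}, (t \subset s) ==> (t \in Y)].

(* A random subcomplex, given by its probability mass function mu,
   mu Y = P(X = Y). *)
Definition random_subcomplex (R : realFieldType) n (mu : {set {set 'I_n}} -> R) : Prop :=
  (forall Y, 0 <= mu Y) /\ (\sum_(Y : {set {set 'I_n}}) mu Y = 1) /\
  (forall Y, ~~ subcomplex Y -> mu Y = 0).

Definition act_perm n (g : {perm 'I_n}) (Y : {set {set 'I_n}}) : {set {set 'I_n}} :=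
  [set [set g x | x in s] | s : {set 'I_n} in Y].

(* X and gX have the same distribution: P(gX = Y) = P(X = Y). *)
Definition homogeneous (R : realFieldType) n (mu : {set {set 'I_n}} -> R) : Prop :=
  forall (g : {perm 'I_n}) (Y : {set {set 'I_n}}),
    \sum_(Z : {set {set 'I_n}} | act_perm g Z == Y) mu Z = mu Y.

Definition prob_sub (R : realFieldType) n (mu : {set {set 'I_n}} -> R) (Y : {set {set 'I_n}}) : R :=
  \sum_(Z : {set {set 'I_n}} | Y \subset Z) mu Z.

Definition spatially_independent (R : realFieldType) n (mu : {set {set 'I_n}} -> R) : Prop :=
  forall Y1 Y2 : {set {set 'I_n}}, subcomplex Y1 -> subcomplex Y2 ->
    prob_sub mu (Y1 :|: Y2) * prob_sub mu (Y1 :&: Y2) =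
    prob_sub mu Y1 * prob_sub mu Y2.

Definition fnum n (i : nat) (Y : {set {set 'I_n}}) : nat :=
  #|[set s in Y | #|s| == i.+1]|.

Definition enum_ext n (i : nat) (Y : {set {set 'I_n}}) : nat :=
  #|[set s : {set 'I_n} | [&& #|s| == i.+1, s \notin Y &
       [forall t : {set 'I_n}, (t \proper s) ==> (t \in Y)]]]|.

Definition Xnp (R : realFieldType) n (p : 'I_n -> R) (Y : {set {set 'I_n}}) : R :=
  if subcomplex Y then
    \prod_(i < n) (p i ^+ fnum i Y * (1 - p i) ^+ enum_ext i Y)
  else 0.

Definition multiparam (R : realFieldType) n (p : 'I_n -> R) : Prop :=
  forall i, 0 <= p i <= 1.

(* X(n,p) is the law of the largest subcomplex [core C] inside a random family C
   of faces in which every face s is kept independently with probability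
   p_{|s|-1}: a subcomplex Y lies in [core C] iff Y \subset C, so
   P(Y \subset X) = \prod_(s in Y) p_{|s|-1}.  This product form gives spatial
   independence, and homogeneity since it only depends on face sizes.
   Conversely, a law on subcomplexes is determined by the numbers
   P(Y \subset X) (Moebius inversion).  For a maximal face s of Y, spatial
   independence of Y :\ s and powerset s yields
   P(Y \subset X) = r(s) P(Y :\ s \subset X) with
   r(s) = P(powerset s \subset X) / P(boundary s \subset X), and homogeneity
   makes r(s) depend only on |s|; induction on Y gives the product form with
   p_{|s|-1} = r(s). *)

From HB Require Import structures.
From mathcomp Require Import all_boot all_order all_fingroup all_algebra.
From mathcomp Require Import primitive_action alt.
Import Order.TTheory GRing.Theory Num.Theory.
Set Implicit Arguments. Unset Strict Implicit. Unset Printing Implicit Defensive.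
Local Open Scope ring_scope.

Lemma setact_subset (aT : finGroupType) (T : finType) (to : {action aT &-> T})
    (A B : {set T}) (a : aT) :
  (setact to A a \subset setact to B a) = (A \subset B).
Proof.
apply/idP/idP => [|/(imsetS (to^~ a))]; last by rewrite -!setactE.
by move=> /(imsetS (to^~ a^-1%g)); rewrite -!setactE !actK.
Qed.

Lemma perm_imset_eq_card (T : finType) (A B : {set T}) :
  #|A| = #|B| -> exists g : {perm T}, g @: A = B.
Proof.
move=> eqAB.
have sA : size (enum A) == #|A| by rewrite cardE.
have sB : size (enum B) == #|A| by rewrite eqAB cardE.
pose tA := Tuple sA; pose tB := Tuple sB.
have dt (C : {set T}) (t : #|A|.-tuple T) : val t = enum C -> t \in #|A|.-dtuple(setT).
  by move=> tC; rewrite inE tC enum_uniq; apply/subsetP => ? _; rewrite inE.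
have [g _ tBE] := atransP2 (ntransitive_weak (max_card A) (Sym_trans T))
  (dt A tA erefl) (dt B tB erefl).
exists g; apply/setP=> x; rewrite -[RHS]mem_enum -[enum B]/(val tB) tBE.
by apply/imsetP/mapP => -[y yA ->]; exists y; rewrite ?mem_enum in yA *.
Qed.

Lemma imsetD1_inj (aT rT : finType) (f : aT -> rT) (A : {set aT}) (x : aT) :
  injective f -> f @: (A :\ x) = f @: A :\ f x.
Proof.
move=> inj_f; apply/setP=> y; rewrite in_setD1.
apply/imsetP/andP => [[z /setD1P[zx zA] ->]|[yfx /imsetP[z zA yE]]].
  by rewrite (inj_eq inj_f) zx imset_f.
by exists z; rewrite // in_setD1 zA andbT; apply: contraNneq yfx => zx; rewrite yE zx.
Qed.

Lemma prod_setU_setI (R : comPzSemiRingType) (T : finType) (A B : {set T}) (F : T -> R) :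
  \prod_(x in A :|: B) F x * \prod_(x in A :&: B) F x =
  \prod_(x in A) F x * \prod_(x in B) F x.
Proof.
rewrite !(big_mkcond (fun x => x \in _)) -!big_split /=; apply: eq_bigr => x _.
by rewrite !inE; case: (x \in A); case: (x \in B); rewrite ?mulr1 ?mul1r.
Qed.

Lemma sum_indep_coins (R : comPzRingType) (T : finType) (f : T -> R) (A B : {set T}) :
  [disjoint A & B] ->
  \sum_(C : {set T} | (A \subset C) && [disjoint B & C])
      \prod_x (if x \in C then f x else 1 - f x)
  = \prod_(x in A) f x * \prod_(x in B) (1 - f x).
Proof.
move=> dAB.
pose F x := if x \in B then 0 else f x; pose G x := if x \in A then 0 else 1 - f x.
transitivity (\prod_x (F x + G x)).
  rewrite bigA_distr big_mkcond /=; apply: eq_big => // C _.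
  case: ifP => [/andP[sAC dBC]|/negbT].
    apply: eq_bigr => x _; rewrite /F /G; case: ifP => xC.
      by rewrite (disjointFl dBC xC).
    by case: ifP => // xA; move: xC; rewrite (subsetP sAC x xA).
  rewrite negb_and => /orP[/subsetPn[x xA xC]|].
    by rewrite (bigD1 x) //= (negPf xC) /G xA mul0r.
  rewrite -setI_eq0 => /set0Pn[x]; rewrite inE => /andP[xB xC].
  by rewrite (bigD1 x) //= xC /F xB mul0r.
rewrite [\prod_(x in A) _]big_mkcond [\prod_(x in B) _]big_mkcond -big_split /=.
apply: eq_bigr => x _; rewrite /F /G.
have [xA|xA] := boolP (x \in A); first by rewrite (disjointFr dAB xA) addr0 mulr1.
by case: (x \in B); rewrite ?add0r ?addr0 ?mul1r // addrC subrK.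
Qed.

Definition boundary (T : finType) (s : {set T}) := powerset s :\ s.

Lemma mem_boundary (T : finType) (s t : {set T}) : (t \in boundary s) = (t \proper s).
Proof. by rewrite in_setD1 powersetE properEneq. Qed.

Section Subcomplexes.
Variable n : nat.
Implicit Types (s t : {set 'I_n}) (Y Z : {set {set 'I_n}}) (g : {perm 'I_n}).

Lemma subcomplexP Y :
  reflect (set0 \in Y /\ forall s t, s \in Y -> t \subset s -> t \in Y)
          (subcomplex Y).
Proof.
apply: (iffP andP) => -[Y0 HY]; split=> //.
  by move=> s t sY ts; move/forallP/(_ s): HY; rewrite sY => /forallP/(_ t)/implyP; apply.
by apply/forallP=> s; apply/implyP=> sY; apply/forallP=> t; apply/implyP; apply: HY.
Qed.

Lemma subcomplexU Y Z : subcomplex Y -> subcomplex Z -> subcomplex (Y :|: Z).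
Proof.
move=> /subcomplexP[Y0 HY] /subcomplexP[_ HZ]; apply/subcomplexP.
split=> [|s t]; first by rewrite inE Y0.
by rewrite !inE => /orP[/HY|/HZ] H /H ->; rewrite ?orbT.
Qed.

Lemma subcomplexI Y Z : subcomplex Y -> subcomplex Z -> subcomplex (Y :&: Z).
Proof.
move=> /subcomplexP[Y0 HY] /subcomplexP[Z0 HZ]; apply/subcomplexP.
split=> [|s t]; first by rewrite inE Y0 Z0.
by rewrite !inE => /andP[/HY HYs /HZ HZs] ts; rewrite HYs ?HZs.
Qed.

Lemma subcomplex_powerset s : subcomplex (powerset s).
Proof.
apply/subcomplexP; split=> [|u t]; first by rewrite powersetE sub0set.
by rewrite !powersetE => us /subset_trans; apply.
Qed.

Lemma subcomplexD1 Y s : subcomplex Y -> s != set0 ->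
  (forall t, t \in Y -> ~~ (s \proper t)) -> subcomplex (Y :\ s).
Proof.
move=> /subcomplexP[Y0 HY] s0 smax; apply/subcomplexP.
split=> [|u t]; first by rewrite !inE eq_sym s0.
rewrite !inE => /andP[us uY] tu; rewrite (HY u) // andbT.
by apply: contraNneq (smax u uY) => ts; rewrite properEneq eq_sym us -ts.
Qed.

Lemma act_permE g Y : act_perm g Y = setact ('P^*)%act Y g.
Proof. by []. Qed.

Lemma act_permK g : cancel (act_perm g) (act_perm g^-1%g).
Proof. by move=> Y; rewrite !act_permE actK. Qed.

Lemma act_permKV g : cancel (act_perm g^-1%g) (act_perm g).
Proof. by move=> Y; rewrite !act_permE actKV. Qed.

Lemma act_perm_inj g : injective (act_perm g).
Proof. exact: can_inj (act_permK g). Qed.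

Lemma act_perm_subset g Y Z : (act_perm g Y \subset act_perm g Z) = (Y \subset Z).
Proof. by rewrite !act_permE setact_subset. Qed.

Lemma perm_imsetE g s : [set g x | x in s] = ('P^*)%act s g.
Proof. by []. Qed.

Lemma subcomplex_act g Y : subcomplex Y -> subcomplex (act_perm g Y).
Proof.
move=> /subcomplexP[Y0 HY]; apply/subcomplexP; split.
  by apply/imsetP; exists set0 => //; rewrite imset0.
move=> _ t /imsetP[s sY ->]; rewrite perm_imsetE => ts.
apply/imsetP; exists (('P^*)%act t g^-1%g); last by rewrite perm_imsetE actKV.
by apply: HY sY _; rewrite -(setact_subset 'P _ _ g) actKV.
Qed.

Lemma subcomplex_actE g Y : subcomplex (act_perm g Y) = subcomplex Y.
Proof.
apply/idP/idP; last exact: subcomplex_act.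
by move/(subcomplex_act g^-1%g); rewrite act_permK.
Qed.

Lemma act_perm_powerset g s : act_perm g (powerset s) = powerset (('P^*)%act s g).
Proof.
apply/setP=> t; rewrite powersetE; apply/imsetP/idP => [[u]|ts].
  by rewrite powersetE perm_imsetE => us ->; rewrite setact_subset.
exists (('P^*)%act t g^-1%g); last by rewrite perm_imsetE actKV.
by rewrite powersetE -(setact_subset 'P _ _ g) actKV.
Qed.

Lemma act_perm_boundary g s : act_perm g (boundary s) = boundary (('P^*)%act s g).
Proof.
rewrite /boundary [LHS]imsetD1_inj; last exact: (act_inj ('P^*)%act g).
by rewrite -act_perm_powerset.
Qed.

End Subcomplexes.

Section CoinModel.
Variables (R : realFieldType) (n : nat).
Implicit Types (p : 'I_n -> R) (s t : {set 'I_n}) (Y C : {set {set 'I_n}}).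

Definition face_prob p s : R := \prod_(i < n | #|s| == i.+1) p i.

Definition coin_wt p C : R :=
  \prod_s (if s \in C then face_prob p s else 1 - face_prob p s).

Definition core C := [set s | powerset s \subset C].

Definition ext_faces Y := [set s | (s \notin Y) && (boundary s \subset Y)].

Lemma face_prob0 p : face_prob p set0 = 1.
Proof. by rewrite /face_prob cards0 big_pred0. Qed.

Lemma face_probE p s (i : 'I_n) : #|s| = i.+1 -> face_prob p s = p i.
Proof. by move=> si; apply: big_pred1 => j /=; rewrite si eqSS eq_sym. Qed.

Lemma face_card_ord s : s != set0 -> exists i : 'I_n, #|s| = i.+1.
Proof.
rewrite -card_gt0 => s0.
have lt_s : (#|s|.-1 < n)%N by rewrite prednK // -[X in (_ <= X)%N]card_ord max_card.
by exists (Ordinal lt_s); rewrite /= prednK.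
Qed.

Lemma face_prob_compl p s : s != set0 ->
  1 - face_prob p s = face_prob (fun i => 1 - p i) s.
Proof. by move=> /face_card_ord[i si]; rewrite !(face_probE _ si). Qed.

Lemma prod_face_prob p (A : {set {set 'I_n}}) :
  \prod_(s in A) face_prob p s = \prod_(i < n) p i ^+ #|[set s in A | #|s| == i.+1]|.
Proof.
rewrite /face_prob (exchange_big_dep xpredT) //=; apply: eq_bigr => i _.
by rewrite -prodr_const; apply: eq_bigl => s; rewrite inE.
Qed.

Lemma core_sub C : core C \subset C.
Proof. by apply/subsetP=> s; rewrite inE => /subsetP; apply; rewrite powersetE. Qed.

Lemma subcomplex_core C : set0 \in C -> subcomplex (core C).
Proof.
move=> C0; apply/subcomplexP; split=> [|s t].
  by rewrite inE; apply/subsetP=> t; rewrite powersetE subset0 => /eqP->.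
by rewrite !inE => sC ts; apply: subset_trans sC; rewrite powersetS.
Qed.

Lemma sub_core Y C : subcomplex Y -> (Y \subset core C) = (Y \subset C).
Proof.
move=> /subcomplexP[_ HY]; apply/idP/idP => [YC|/subsetP YC].
  exact: subset_trans YC (core_sub C).
apply/subsetP=> s sY; rewrite inE.
by apply/subsetP=> t; rewrite powersetE => ts; apply/YC/(HY s).
Qed.

Lemma core_eq Y C : subcomplex Y ->
  (core C == Y) = (Y \subset C) && [disjoint ext_faces Y & C].
Proof.
move=> HY; apply/eqP/andP => [<-|[YC dYC]].
  split; first exact: core_sub.
  apply/pred0P=> s /=; apply/negP; rewrite inE => /andP[/andP[score bdC] sC].
  have ss : s \in powerset s by rewrite powersetE.
  move: score; rewrite inE -(setD1K ss) subUset sub1set sC.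
  by rewrite (subset_trans bdC (core_sub C)).
have coreY k s : (#|s| < k)%N -> s \in core C -> s \in Y.
  elim: k s => // k IH s; rewrite ltnS => sk sC; apply: contraT => sY.
  have sext : s \in ext_faces Y.
    rewrite inE sY; apply/subsetP=> t; rewrite in_setD1 powersetE => /andP[ts' ts].
    have tps : t \proper s by rewrite properEneq ts' ts.
    apply: IH; first exact: leq_trans (proper_card tps) sk.
    by move: sC; rewrite !inE => /(subset_trans _); apply; rewrite powersetS.
  by rewrite -(disjointFr dYC sext) (subsetP (core_sub C)).
apply/eqP; rewrite eqEsubset (sub_core _ HY) YC andbT.
by apply/subsetP=> s; apply: coreY.
Qed.

Lemma disjoint_ext_faces Y : [disjoint Y & ext_faces Y].
Proof. by apply/pred0P=> s /=; rewrite inE; case: (s \in Y). Qed.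

Lemma enum_extE i Y : enum_ext i Y = #|[set s in ext_faces Y | #|s| == i.+1]|.
Proof.
apply: eq_card => s; rewrite !inE [RHS]andbC; congr [&& _, _ & _].
apply/forallP/subsetP => [H t|H t]; first by rewrite mem_boundary => /(implyP (H t)).
by apply/implyP; rewrite -mem_boundary => /H.
Qed.

Lemma Xnp_subcomplexE p Y : subcomplex Y ->
  Xnp p Y = \prod_(s in Y) face_prob p s * \prod_(s in ext_faces Y) (1 - face_prob p s).
Proof.
move=> HY; have /subcomplexP[Y0 _] := HY.
rewrite /Xnp HY big_split /= prod_face_prob; congr (_ * _).
rewrite (eq_bigr (face_prob (fun i => 1 - p i))) ?prod_face_prob; last first.
  move=> s; rewrite inE => /andP[sY _]; apply: face_prob_compl.
  by apply: contraNneq sY => ->.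
by apply: eq_bigr => i _; rewrite enum_extE.
Qed.

Lemma Xnp_coinE p Y : Xnp p Y = \sum_(C | core C == Y) coin_wt p C.
Proof.
have [HY|nHY] := boolP (subcomplex Y); last first.
  rewrite /Xnp (negPf nHY) big1 // => C /eqP coreC; rewrite /coin_wt (bigD1 set0) //=.
  have C0 : set0 \notin C by apply: contraNN nHY => /subcomplex_core; rewrite coreC.
  by rewrite (negPf C0) face_prob0 subrr mul0r.
rewrite Xnp_subcomplexE // (eq_bigl _ _ (fun C => core_eq C HY)).
exact/esym/sum_indep_coins/disjoint_ext_faces.
Qed.

Lemma prob_sub_Xnp p Y : subcomplex Y ->
  prob_sub (Xnp p) Y = \prod_(s in Y) face_prob p s.
Proof.
move=> HY; rewrite /prob_sub (eq_bigr _ (fun Z _ => Xnp_coinE p Z)).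
transitivity (\sum_(C | Y \subset core C) coin_wt p C).
  rewrite [RHS](partition_big core (fun Z => Y \subset Z)) //=.
  apply: eq_bigr => Z YZ; apply: eq_bigl => C.
  by case: eqP => [->|]; rewrite ?YZ ?andbF.
rewrite (eq_bigl _ _ (fun C => sub_core C HY)).
rewrite (eq_bigl (fun C => (Y \subset C) && [disjoint set0 & C])); last first.
  by move=> C; rewrite -setI_eq0 set0I eqxx andbT.
by rewrite sum_indep_coins ?big_set0 ?mulr1 // -setI_eq0 setI0.
Qed.

End CoinModel.

Section Laws.
Variables (R : realFieldType) (n : nat).
Implicit Types (mu : {set {set 'I_n}} -> R) (p : 'I_n -> R).
Implicit Types (s t : {set 'I_n}) (Y Z : {set {set 'I_n}}) (g : {perm 'I_n}).

Lemma prob_sub_ge0 mu Y : (forall Z, 0 <= mu Z) -> 0 <= prob_sub mu Y.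
Proof. by move=> mu_ge0; apply: sumr_ge0. Qed.

Lemma prob_subS mu Y Z : (forall Z, 0 <= mu Z) -> Y \subset Z ->
  prob_sub mu Z <= prob_sub mu Y.
Proof.
move=> mu_ge0 YZ; rewrite /prob_sub [X in _ <= X]big_mkcond [X in X <= _]big_mkcond.
apply: ler_sum => W _; case: ifP => [ZW|_]; first by rewrite (subset_trans YZ ZW).
by case: ifP.
Qed.

(* Moebius inversion: P(X = Y) is P(Y \subset X) minus the masses of the
   families strictly above Y, which are known by downward induction. *)
Lemma eq_of_prob_sub mu1 mu2 :
  (forall Y, ~~ subcomplex Y -> mu1 Y = 0) -> (forall Y, ~~ subcomplex Y -> mu2 Y = 0) ->
  (forall Y, subcomplex Y -> prob_sub mu1 Y = prob_sub mu2 Y) -> mu1 =1 mu2.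
Proof.
move=> mu1_supp mu2_supp eq_prob.
suff H k Y : (#|~: Y| < k)%N -> mu1 Y = mu2 Y by move=> Y; apply: (H _ Y (ltnSn _)).
elim: k Y => // k IH Y lt_Yk.
have [HY|nHY] := boolP (subcomplex Y); last by rewrite mu1_supp ?mu2_supp.
have eq_above : \sum_(Z : {set {set 'I_n}} | (Y \subset Z) && (Z != Y)) mu1 Z =
                \sum_(Z : {set {set 'I_n}} | (Y \subset Z) && (Z != Y)) mu2 Z.
  apply: eq_bigr => Z /andP[YZ ZY]; apply: IH.
  have /proper_card : ~: Z \proper ~: Y by rewrite properC properEneq eq_sym ZY.
  by move=> /leq_trans; apply.
have := eq_prob Y HY; rewrite /prob_sub (bigD1 Y) //= [X in _ = X](bigD1 Y) //=.
by rewrite eq_above; apply: addIr.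
Qed.

Lemma prob_sub_comp_act mu g Y :
  prob_sub (mu \o act_perm g) Y = prob_sub mu (act_perm g Y).
Proof.
rewrite /prob_sub [RHS](reindex_inj (@act_perm_inj _ g)) /=.
by apply: eq_bigl => Z; rewrite act_perm_subset.
Qed.

Lemma homogeneousP mu :
  homogeneous mu <-> forall g Y, mu (act_perm g Y) = mu Y.
Proof.
have sum_act g Y : \sum_(Z | act_perm g Z == Y) mu Z = mu (act_perm g^-1%g Y).
  apply: big_pred1 => Z /=.
  by apply/eqP/eqP => [<-|->]; rewrite ?act_permK ?act_permKV.
split=> hom g Y; first by rewrite -[in RHS](hom g^-1%g) sum_act invgK.
by rewrite sum_act hom.
Qed.

Lemma prob_sub_act mu g Y : homogeneous mu ->
  prob_sub mu (act_perm g Y) = prob_sub mu Y.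
Proof.
move=> /homogeneousP hom; rewrite -prob_sub_comp_act.
by apply: eq_bigr => Z _; apply: hom.
Qed.

Lemma Xnp_homogeneous p : homogeneous (Xnp p).
Proof.
apply/homogeneousP => g; apply: (@eq_of_prob_sub (Xnp p \o act_perm g)) => Y.
- by rewrite -(subcomplex_actE g) => /negPf nHY; rewrite /= /Xnp nHY.
- by move=> /negPf nHY; rewrite /Xnp nHY.
move=> HY; rewrite prob_sub_comp_act !prob_sub_Xnp ?subcomplex_actE //.
rewrite big_imset /=; last by move=> s t _ _; apply: (act_inj ('P^*)%act g).
by apply: eq_bigr => s _; rewrite /face_prob perm_imsetE card_setact.
Qed.

Lemma Xnp_spatially_independent p : spatially_independent (Xnp p).
Proof.
move=> Y1 Y2 HY1 HY2.
by rewrite !prob_sub_Xnp ?subcomplexU ?subcomplexI ?prod_setU_setI.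
Qed.

End Laws.

Section Converse.
Variables (R : realFieldType) (n : nat).
Implicit Types (mu : {set {set 'I_n}} -> R) (s t : {set 'I_n}) (Y Z : {set {set 'I_n}}).

(* If P(boundary s \subset X) = 0 the ratio is 0, since x / 0 = 0. *)
Definition ratio mu s := prob_sub mu (powerset s) / prob_sub mu (boundary s).

Lemma ratio_ge0_le1 mu s : (forall Y, 0 <= mu Y) -> 0 <= ratio mu s <= 1.
Proof.
move=> mu_ge0; have P_ge0 := prob_sub_ge0 _ mu_ge0.
rewrite /ratio divr_ge0 //=; have [P0|P_gt0] := eqVneq (prob_sub mu (boundary s)) 0.
  by rewrite P0 invr0 mulr0.
rewrite -(divff P_gt0) ler_wpM2r ?invr_ge0 //.
by apply: prob_subS => //; apply: subD1set.
Qed.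

Lemma ratio_card mu s t : homogeneous mu -> #|s| = #|t| -> ratio mu s = ratio mu t.
Proof.
move=> hom /perm_imset_eq_card[g <-].
by rewrite /ratio perm_imsetE -act_perm_powerset -act_perm_boundary !prob_sub_act.
Qed.

(* The [pick] always succeeds, as i < n; the default 0 is never used. *)
Definition param_of mu (i : 'I_n) : R :=
  if [pick s : {set 'I_n} | #|s| == i.+1] is Some s then ratio mu s else 0.

Lemma face_prob_param mu s : homogeneous mu -> s != set0 ->
  face_prob (param_of mu) s = ratio mu s.
Proof.
move=> hom /face_card_ord[i si]; rewrite (face_probE _ si) /param_of.
case: pickP => [t /eqP ti|/(_ s)]; last by rewrite si eqxx.
by apply: ratio_card; rewrite // ti si.
Qed.

Lemma prob_sub_set0 mu : random_subcomplex mu -> prob_sub mu [set set0] = 1.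
Proof.
move=> [_ [mu_sum1 mu_supp]]; rewrite -mu_sum1 /prob_sub big_mkcond /=.
apply: eq_bigr => Z _; rewrite sub1set; case: ifP => // Z0.
by rewrite mu_supp //; apply/subcomplexP => -[]; rewrite Z0.
Qed.

(* Spatial independence applied to Y = (Y :\ s) :|: powerset s, whose two
   pieces meet in the boundary of s. *)
Lemma prob_sub_max_face mu Y s :
  (forall Z, 0 <= mu Z) -> spatially_independent mu -> subcomplex Y ->
  s \in Y -> s != set0 -> (forall t, t \in Y -> ~~ (s \proper t)) ->
  prob_sub mu Y = ratio mu s * prob_sub mu (Y :\ s).
Proof.
move=> mu_ge0 si HY sY s0 smax; have /subcomplexP[_ Ydown] := HY.
have YU : (Y :\ s) :|: powerset s = Y.
  apply/eqP; rewrite eqEsubset subUset subD1set /=; apply/andP; split.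
    by apply/subsetP=> t; rewrite powersetE; apply: Ydown.
  apply/subsetP=> t tY; rewrite !inE tY andbT.
  by case: eqP => [->|]; rewrite ?subxx ?orbT.
have YI : (Y :\ s) :&: powerset s = boundary s.
  apply/setP=> t; rewrite !inE; case: (t == s) => //=.
  by apply/andP/idP => [[]//|ts]; split=> //; apply: Ydown ts.
have := si _ _ (subcomplexD1 HY s0 smax) (subcomplex_powerset s).
rewrite YU YI /ratio => si_s.
have [P0|Pn0] := eqVneq (prob_sub mu (boundary s)) 0.
  rewrite P0 invr0 mulr0 mul0r; apply/eqP; rewrite eq_le prob_sub_ge0 // andbT -P0.
  apply: prob_subS; rewrite // -YI.
  exact: subset_trans (subsetIl _ _) (subD1set Y s).
by apply: (mulIf Pn0); rewrite si_s mulrAC divfK // mulrC.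
Qed.

Lemma prob_sub_prod mu : random_subcomplex mu -> homogeneous mu ->
  spatially_independent mu -> forall Y, subcomplex Y ->
  prob_sub mu Y = \prod_(s in Y) face_prob (param_of mu) s.
Proof.
move=> mu_rand hom si; have [mu_ge0 _] := mu_rand.
suff H k Y : (#|Y| < k)%N -> subcomplex Y ->
    prob_sub mu Y = \prod_(s in Y) face_prob (param_of mu) s.
  by move=> Y; apply: (H _ Y (ltnSn _)).
elim: k Y => // k IH Y lt_Yk HY; have /subcomplexP[Y0 _] := HY.
have [s sY smax] := arg_maxnP (fun s => #|s|) Y0.
have [s_eq0|s0] := eqVneq s set0.
  have -> : Y = [set set0].
    apply/setP=> t; rewrite inE; apply/idP/eqP => [tY|->//].
    by apply/eqP; rewrite -cards_eq0 -leqn0; have /= := smax t tY; rewrite s_eq0 cards0.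
  by rewrite prob_sub_set0 // big_set1 face_prob0.
have smax' t : t \in Y -> ~~ (s \proper t).
  move=> tY; have /= le_ts := smax t tY.
  by apply/negP => /proper_card; rewrite ltnNge le_ts.
rewrite (prob_sub_max_face mu_ge0 si HY sY s0 smax') (big_setD1 _ sY) /=.
rewrite face_prob_param // IH ?subcomplexD1 //.
by rewrite -ltnS (leq_ltn_trans _ lt_Yk) // proper_card // properD1.
Qed.

End Converse.

Theorem theorem3p3 (R : realFieldType) (n : nat) :
  (forall p : 'I_n -> R, multiparam p ->
     homogeneous (Xnp p) /\ spatially_independent (Xnp p)) /\
  (forall mu : {set {set 'I_n}} -> R, random_subcomplex mu ->
     homogeneous mu -> spatially_independent mu ->
     exists p : 'I_n -> R, multiparam p /\ forall Y, mu Y = Xnp p Y).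
Proof.
split=> [p _|mu mu_rand hom si].
  by split; [exact: Xnp_homogeneous | exact: Xnp_spatially_independent].
have [mu_ge0 [_ mu_supp]] := mu_rand.
exists (param_of mu); split.
  move=> i; rewrite /param_of; case: pickP => [s _|_]; last by rewrite lexx ler01.
  exact: ratio_ge0_le1.
apply: eq_of_prob_sub => // [Y /negPf nHY|Y HY]; first by rewrite /Xnp nHY.
by rewrite prob_sub_prod // prob_sub_Xnp.
Qed.
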